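(* The set $\mathcal{I}_{\mathrm{str}}(C_{01})$ has the cardinality of the continuum.
   Context: Let $\mathbf{2}=\{0,1\}$. A partial function of arity $n$ on $\mathbf{2}$ is a map $f:\operatorname{dom} f\to\mathbf{2}$ with $\operatorname{dom} f\subseteq \mathbf{2}^n$; it is total if $\operatorname{dom} f=\mathbf{2}^n$. $P_{\mathbf{2}}$ is the set of all partial functions, $O_{\mathbf{2}}$ the set of total ones. Composition $F=f(g_1,\dots,g_n)$ is given by $F(\mathbf{x})=f(g_1(\mathbf{x}),\dots,g_n(\mathbf{x}))$ on $\operatorname{dom} F=\{\mathbf{x}\in\bigcap_i\operatorname{dom} g_i : (g_1(\mathbf{x}),\dots,g_n(\mathbf{x}))\in\operatorname{dom} f\}$. A partial clone is a composition-closed subset of $P_{\mathbf{2}}$ containing all projections; a total clone is one contained in $O_{\mathbf{2}}$. A partial clone $X$ is strong if it contains every restriction of each of its members. For a total clone $C$, $\mathcal{I}_{\mathrm{str}}(C)$ is the set of all strong partial clones $X$ with $X\cap O_{\mathbf{2}}=C$. $C_{01}$ is the total clone generated by the constant functions $c_0$ and $c_1$ (it consists of all projections and all constant functions). *)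

From mathcomp Require Import all_boot.
Set Implicit Arguments. Unset Strict Implicit. Unset Printing Implicit Defensive.

(* Arguments: tuples x in 2^(n+1), encoded as finite functions 'I_(n.+1) -> bool. *)
Definition arg (n : nat) := {ffun 'I_n.+1 -> bool}.

(* A partial function of arity n.+1 on 2 = {0,1}: value None = outside dom f. *)
Definition pfn (n : nat) := {ffun arg n -> option bool}.

Definition pfun := {n : nat & pfn n}.

Definition mkP (n : nat) (f : pfn n) : pfun := existT pfn n f.

Definition is_total (n : nat) (f : pfn n) : Prop := forall x, f x <> None.

Definition proj (n : nat) (i : 'I_n.+1) : pfn n := [ffun x : arg n => Some (x i)].
Definition cst (n : nat) (b : bool) : pfn n := [ffun _ : arg n => Some b].

Definition comp (k m : nat) (f : pfn k) (g : 'I_k.+1 -> pfn m) : pfn m :=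
  [ffun x : arg m =>
     if [forall i, g i x != None]
     then f [ffun i => odflt false (g i x)]
     else None].

Definition partial_clone (X : pfun -> Prop) : Prop :=
  (forall n (i : 'I_n.+1), X (mkP (proj i))) /\
  (forall k m (f : pfn k) (g : 'I_k.+1 -> pfn m),
      X (mkP f) -> (forall i, X (mkP (g i))) -> X (mkP (comp f g))).

Definition restriction (n : nat) (g f : pfn n) : Prop :=
  forall x, g x <> None -> g x = f x.

Definition strong (X : pfun -> Prop) : Prop :=
  partial_clone X /\
  (forall n (f g : pfn n), X (mkP f) -> restriction g f -> X (mkP g)).

Definition inC01 (n : nat) (f : pfn n) : Prop :=
  is_total f /\ ((exists i, f = proj i) \/ (exists b, f = cst n b)).

Definition total_part_is_C01 (X : pfun -> Prop) : Prop :=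
  forall n (f : pfn n), (X (mkP f) /\ is_total f) <-> inC01 f.

Definition in_Istr_C01 (X : pfun -> Prop) : Prop :=
  strong X /\ total_part_is_C01 X.

From mathcomp Require Import all_boot.
From mathcomp Require Import boolp classical_sets functions cardinality.
Set Implicit Arguments. Unset Strict Implicit. Unset Printing Implicit Defensive.

(* For [S : nat -> bool], [pol_of S] is the set of partial functions preserving
   [rel_le], [rel_meet], [rel_join] and every [rho j] with [~~ S j]; like every
   set of partial polymorphisms it is a strong partial clone.  The columns
   (x_i, y_i, x_i && y_i) lie in [rel_meet], and dually for joins, so a total
   member is monotone, preserves meets and is join-prime, hence a projection or
   a constant: its total part is C_01.  The partial function [wit k] preserves
   [rho j] iff j <> k: a vector outside [rho j] produced by [wit k] forces the
   j+3 unit rows and the k+3 columns of the argument matrix to be matched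
   bijectively.  So [wit k] lies in [pol_of S] iff [S k], and [S |-> pol_of S] is
   injective.  Conversely P_2 is countable, so every member of I_str(C_01) is
   coded by a subset of nat, and Cantor-Bernstein concludes. *)

Lemma exists_notin (T : finType) (s : seq T) : size s < #|T| -> exists x, x \notin s.
Proof.
move=> s_lt; have [x xs|all_in] := pickP [pred x | x \notin s]; first by exists x.
suff : #|T| <= size s by rewrite leqNgt s_lt.
apply: leq_trans (card_size s); apply/subset_leq_card/fintype.subsetP => x _.
by move: (all_in x) => /= /negbFE.
Qed.

Lemma ord_exists_neq n (a : 'I_n.+2) : exists c, c != a.
Proof.
have [c] : exists c, c \notin [:: a] by apply: exists_notin; rewrite card_ord.
by rewrite inE; exists c.
Qed.

Lemma perfect_matching_card (A B : finType) (M : A -> B -> bool) :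
  (forall a, exists b, M a b) -> (forall b, exists a, M a b) ->
  (forall a a' b, M a b -> M a' b -> a = a') ->
  (forall a b b', M a b -> M a b' -> b = b') -> #|A| = #|B|.
Proof.
move=> rowP colP colU rowU.
have f_inj : injective (fun a => xchoose (rowP a)).
  move=> a a' faa'; apply: (colU a a' (xchoose (rowP a))); first exact: xchooseP.
  by rewrite faa'; exact: xchooseP.
have g_inj : injective (fun b => xchoose (colP b)).
  move=> b b' gbb'; apply: (rowU (xchoose (colP b)) b b').
    exact: (xchooseP (colP b)).
  by rewrite gbb'; exact: (xchooseP (colP b')).
by apply/eqP; rewrite eqn_leq (leq_card _ f_inj) (leq_card _ g_inj).
Qed.

(* Rows of the matrix are indexed by the coordinates [I] of [R], columns by the
   arguments of [f]. *)
Definition preserves n (f : pfn n) (I : Type) (R : (I -> bool) -> Prop) : Prop :=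
  forall rows : I -> arg n, (forall c, R (fun t => rows t c)) ->
  forall vals : I -> bool, (forall t, f (rows t) = Some (vals t)) -> R vals.

Section Preservation.
Variables (I : Type) (R : (I -> bool) -> Prop).

Lemma preserves_proj n (i : 'I_n.+1) : preserves (proj i) R.
Proof.
move=> rows Rrows vals f_rows; have -> // : vals = fun t => rows t i.
by apply: funext => t; move: (f_rows t); rewrite ffunE => -[].
Qed.

Lemma preserves_cst n b : R (fun=> b) -> preserves (cst n b) R.
Proof.
move=> Rb rows _ vals f_rows; have -> // : vals = fun=> b.
by apply: funext => t; move: (f_rows t); rewrite ffunE => -[].
Qed.

Lemma preserves_restriction n (f g : pfn n) :
  preserves f R -> restriction g f -> preserves g R.
Proof.
by move=> Pf gf rows Rrows vals g_rows; apply: (Pf rows) => // t; rewrite -gf g_rows.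
Qed.

Lemma preserves_comp k m (f : pfn k) (g : 'I_k.+1 -> pfn m) :
  preserves f R -> (forall i, preserves (g i) R) -> preserves (comp f g) R.
Proof.
move=> Pf Pg rows Rrows vals fg_rows.
have g_def t : [forall i, g i (rows t) != None].
  by move: (fg_rows t); rewrite ffunE; case: ifP.
apply: (Pf (fun t => [ffun i => odflt false (g i (rows t))])) => [i|t].
  apply: (Pg i rows Rrows) => t; rewrite ffunE.
  by move/forallP: (g_def t) => /(_ i); case: (g i _).
by move: (fg_rows t); rewrite ffunE g_def.
Qed.

Lemma preserves_total n (f : pfn n) (rows : I -> arg n) :
  is_total f -> preserves f R -> (forall c, R (fun t => rows t c)) ->
  R (fun t => odflt false (f (rows t))).
Proof.
move=> f_tot Pf Rrows; apply: (Pf rows Rrows) => t.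
by move: (f_tot (rows t)); case: (f _).
Qed.

End Preservation.

Section MonotoneJoinPrime.
Variables (I : finType) (F : {ffun I -> bool} -> bool).

Definition ffmeet (x y : {ffun I -> bool}) := [ffun i => x i && y i].
Definition ffjoin (x y : {ffun I -> bool}) := [ffun i => x i || y i].
Definition ffunit (i : I) : {ffun I -> bool} := [ffun j => j == i].

Hypothesis F_mono : forall x y : {ffun I -> bool}, (forall i, x i ==> y i) -> F x ==> F y.
Hypothesis F_meet : forall x y : {ffun I -> bool}, F x -> F y -> F (ffmeet x y).
Hypothesis F_join_prime : forall x y : {ffun I -> bool}, F (ffjoin x y) -> F x || F y.

Lemma join_prime_unit : F [ffun=> false] = false ->
  forall x, F x -> exists2 i, x i & F (ffunit i).
Proof.
move=> F0; suff supp_ind (s : seq I) (x : {ffun I -> bool}) :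
    (forall i, x i -> i \in s) -> F x -> exists2 i, x i & F (ffunit i).
  by move=> x; apply: (supp_ind (enum I)) => i _; rewrite mem_enum.
elim: s x => [|a s IHs] x xs Fx.
  have x0 : x = [ffun=> false].
    by apply/ffunP => i; rewrite ffunE; apply/negbTE/negP => /xs.
  by move: Fx; rewrite x0 F0.
pose y := [ffun i => x i && (i != a)].
have ys i : y i -> i \in s.
  by rewrite ffunE => /andP[/xs]; rewrite inE => /orP[/eqP->|//]; rewrite eqxx.
have [xa|xa] := boolP (x a); last first.
  have xy : x = y.
    by apply/ffunP => i; rewrite ffunE; case: eqP => [->|_]; rewrite ?andbT ?(negbTE xa).
  by move: Fx; rewrite xy; exact: IHs.
have xy : x = ffjoin (ffunit a) y.
  by apply/ffunP => i; rewrite !ffunE; case: eqP => [->|_]; rewrite ?xa ?andbT.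
rewrite xy in Fx; case/orP: (F_join_prime Fx) => [Fa|Fy]; first by exists a.
by have [i yi Fi] := IHs y ys Fy; exists i => //; move: yi; rewrite ffunE => /andP[].
Qed.

Lemma mono_meet_join_prime_classification :
  (exists i, forall x, F x = x i) \/ (exists b, forall x, F x = b).
Proof.
have [F0|F0] := boolP (F [ffun=> false]).
  right; exists true => x; apply: (implyP (F_mono _)) F0 => i.
  by rewrite ffunE.
have [F1|F1] := boolP (F [ffun=> true]); last first.
  right; exists false => x; apply/negbTE; apply: contra F1 => Fx.
  by apply: (implyP (F_mono _)) Fx => i; rewrite ffunE implybT.
have [i _ Fi] := join_prime_unit (negbTE F0) F1.
left; exists i => x; apply/idP/idP => [Fx|xi].
  have [j xj Fj] := join_prime_unit (negbTE F0) Fx.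
  have [<-//|ji] := eqVneq j i.
  have : ffmeet (ffunit j) (ffunit i) = [ffun=> false].
    by apply/ffunP => l; rewrite !ffunE; case: eqVneq => // ->; rewrite (negbTE ji).
  by move/(congr1 F); rewrite (negbTE F0) F_meet.
by apply: (implyP (F_mono _)) Fi => j; rewrite ffunE; apply/implyP => /eqP->.
Qed.

End MonotoneJoinPrime.

Inductive index3 : Type := I0 | I1 | I2.

Definition rel_le (v : bool -> bool) : Prop := v false ==> v true.

Definition all_or_at_most_one (a b c : bool) : bool :=
  (a && b && c) || ~~ [|| a && b, a && c | b && c].

Definition rel_meet (v : index3 -> bool) : Prop :=
  all_or_at_most_one (v I0) (v I1) (v I2).

Definition rel_join (v : index3 -> bool) : Prop := rel_meet (negb \o v).

Section TotalPreservingFunctions.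
Variables (n : nat) (f : pfn n).
Hypotheses (f_tot : is_total f) (f_le : preserves f rel_le).
Hypotheses (f_meet : preserves f rel_meet) (f_join : preserves f rel_join).

Let F (x : arg n) : bool := odflt false (f x).

Let fE (x : arg n) : f x = Some (F x).
Proof. by rewrite /F; move: (@f_tot x); case: (f x). Qed.

Let F_mono (x y : arg n) : (forall i, x i ==> y i) -> F x ==> F y.
Proof.
exact: (preserves_total (rows := fun b : bool => if b then y else x) f_tot f_le).
Qed.

Let F_meet (x y : arg n) : F x -> F y -> F (ffmeet x y).
Proof.
move=> Fx Fy; have := preserves_total (rows := fun t =>
  match t with I0 => x | I1 => y | I2 => ffmeet x y end) f_tot f_meet.
rewrite /rel_meet /all_or_at_most_one /= -/(F x) -/(F y) Fx Fy /= orbF; apply=> i.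
by rewrite /= ffunE; case: (x i); case: (y i).
Qed.

Let F_join_prime (x y : arg n) : F (ffjoin x y) -> F x || F y.
Proof.
move=> Fxy; have := preserves_total (rows := fun t =>
  match t with I0 => x | I1 => y | I2 => ffjoin x y end) f_tot f_join.
rewrite /rel_join /rel_meet /= -/(F x) -/(F y) -/(F (ffjoin x y)) Fxy.
case: (F x); case: (F y) => //=; apply=> i.
by rewrite /= ffunE; case: (x i); case: (y i).
Qed.

Lemma total_preserving_inC01 : inC01 f.
Proof.
split=> //; case: (mono_meet_join_prime_classification F_mono F_meet F_join_prime).
  by case=> i Fi; left; exists i; apply/ffunP => x; rewrite fE ffunE Fi.
by case=> b Fb; right; exists b; apply/ffunP => x; rewrite fE ffunE Fb.
Qed.

End TotalPreservingFunctions.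

Definition rho_mat j (t : option 'I_j.+3) (c : 'I_j.+3) : bool :=
  if t is Some a then c == a else true.

Definition rho j (v : option 'I_j.+3 -> bool) : Prop :=
  (exists b, forall t, v t = b) \/ (exists c, forall t, v t = rho_mat t c).

Lemma rho_single_one j (v : option 'I_j.+3 -> bool) s :
  v None -> v (Some s) -> (forall s', v (Some s') -> s' = s) -> rho v.
Proof.
move=> vN vs vs_uniq; right; exists s => -[s'|] //=.
case: eqP => [<- //|ss']; apply/negbTE/negP => /vs_uniq s's.
by apply: ss'; rewrite s's.
Qed.

Definition pol_of (S : nat -> bool) (p : pfun) : Prop :=
  let (n, f) := p in
  [/\ preserves f rel_le, preserves f rel_meet, preserves f rel_join
    & forall j, ~~ S j -> preserves f (@rho j)].

Lemma pol_of_strong S : strong (pol_of S).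
Proof.
split; first split.
- by move=> n i; split=> [||| j _]; apply: preserves_proj.
- move=> k m f g [f_le f_meet f_join f_rho] Pg.
  split=> [||| j Sj].
  + by apply: preserves_comp => // i; case: (Pg i).
  + by apply: preserves_comp => // i; case: (Pg i).
  + by apply: preserves_comp => // i; case: (Pg i).
  + apply: preserves_comp => [|i]; first exact: f_rho.
    by case: (Pg i) => _ _ _; apply.
- move=> n f g [f_le f_meet f_join f_rho] gf.
  by split=> [||| j Sj]; apply: (preserves_restriction _ gf) => //; apply: f_rho.
Qed.

Lemma pol_of_total_part S : total_part_is_C01 (pol_of S).
Proof.
move=> n f; split=> [[[f_le f_meet f_join _] f_tot]|[f_tot C01_f]].
  exact: total_preserving_inC01.
split=> //; case: C01_f => [[i ->]|[b ->]].
  by split=> [||| j _]; apply: preserves_proj.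
split=> [||| j _]; apply: preserves_cst; [exact: implybb|by case: b|by case: b|].
by left; exists b.
Qed.

Definition rho_row j (t : option 'I_j.+3) : arg j.+2 := [ffun c => rho_mat t c].

(* [wit k] is defined only on the rows of [rho_mat]: 1 on the all-ones row, 0 on
   the unit rows.  Applied to the rows of [rho_mat] it yields (1, 0, ..., 0),
   which is not in [rho k]. *)
Definition wit k : pfn k.+2 :=
  [ffun x => if x == rho_row None then Some true
             else if [exists a, x == rho_row (Some a)] then Some false else None].

Lemma rho_row_Some_neq_None k (a : 'I_k.+3) : rho_row (Some a) != rho_row None.
Proof.
have [c ca] := ord_exists_neq a.
by apply/eqP => /ffunP/(_ c); rewrite !ffunE /= (negbTE ca).
Qed.

Lemma wit_rho_row k (t : option 'I_k.+3) : wit k (rho_row t) = Some (t == None).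
Proof.
rewrite ffunE; case: t => [a|]; last by rewrite eqxx.
rewrite (negbTE (rho_row_Some_neq_None a)); case: existsP => // -[]; by exists a.
Qed.

Lemma wit_SomeP k x v : wit k x = Some v ->
  if v then x = rho_row None else exists a, x = rho_row (Some a).
Proof.
rewrite ffunE; case: eqP => [-> [<-] //|_].
by case: existsP => // -[a /eqP ->] [<-]; exists a.
Qed.

Section WitRows.
Variables (k : nat) (I : Type) (rows : I -> arg k.+2) (vals : I -> bool).
Hypothesis wit_rows : forall t, wit k (rows t) = Some (vals t).

Lemma wit_rows_true t : vals t -> forall c, rows t c.
Proof.
by move=> vt c; move: (wit_SomeP (wit_rows t)); rewrite vt => ->; rewrite ffunE.
Qed.

Lemma wit_rows_false t : ~~ vals t -> exists a, forall c, rows t c = (c == a).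
Proof.
move=> /negbTE vt; move: (wit_SomeP (wit_rows t)); rewrite vt => -[a ->].
by exists a => c; rewrite ffunE.
Qed.

Lemma wit_rows_all_true t : (forall c, rows t c) -> vals t.
Proof.
move=> rt; apply: contraT => /wit_rows_false [a ra].
have [c ca] := ord_exists_neq a.
by move: (rt c); rewrite ra (negbTE ca).
Qed.

(* With at most two zeros, [vals] is itself a column: pick a column avoiding the
   positions of the 1s in the (unit) rows where [vals] vanishes. *)
Lemma wit_vals_in_rel (R : (I -> bool) -> Prop) t1 t2 :
  (forall c, R (fun t => rows t c)) -> (forall t, ~~ vals t -> t = t1 \/ t = t2) ->
  R vals.
Proof.
move=> Rcols zeros.
have unit_row t : exists a, ~~ vals t -> forall c, rows t c = (c == a).
  by case: (boolP (vals t)) => [_|/wit_rows_false [a ra]]; [exists ord0|exists a].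
have [a1 r1] := unit_row t1; have [a2 r2] := unit_row t2.
have [c] : exists c, c \notin [:: a1; a2] by apply: exists_notin; rewrite card_ord.
rewrite !inE negb_or => /andP[ca1 ca2].
suff -> : vals = fun t => rows t c by [].
apply: funext => t; case vt: (vals t); first by rewrite (wit_rows_true vt).
case: (zeros t (negbT vt)) => ?; subst t.
  by rewrite r1 ?vt ?(negbTE ca1).
by rewrite r2 ?vt ?(negbTE ca2).
Qed.

End WitRows.

Lemma wit_le k : preserves (wit k) rel_le.
Proof.
move=> rows Rrows vals wit_rows.
case v0: (vals false); case v1: (vals true); try by rewrite /rel_le v0 v1.
apply: (wit_vals_in_rel wit_rows Rrows (t1 := true) (t2 := true)).
by case; rewrite ?v0; auto.
Qed.

Lemma wit_meet k : preserves (wit k) rel_meet.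
Proof.
move=> rows Rrows vals wit_rows.
case v0: (vals I0); case v1: (vals I1); case v2: (vals I2);
  try by rewrite /rel_meet v0 v1 v2.
- apply: (wit_vals_in_rel wit_rows Rrows (t1 := I2) (t2 := I2)).
  by case; rewrite ?v0 ?v1; auto.
- apply: (wit_vals_in_rel wit_rows Rrows (t1 := I1) (t2 := I1)).
  by case; rewrite ?v0 ?v2; auto.
- apply: (wit_vals_in_rel wit_rows Rrows (t1 := I0) (t2 := I0)).
  by case; rewrite ?v1 ?v2; auto.
Qed.

Lemma wit_join k : preserves (wit k) rel_join.
Proof.
move=> rows Rrows vals wit_rows.
case v0: (vals I0); case v1: (vals I1); case v2: (vals I2);
  try by rewrite /rel_join /rel_meet /= v0 v1 v2.
- apply: (wit_vals_in_rel wit_rows Rrows (t1 := I1) (t2 := I2)).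
  by case; rewrite ?v0; auto.
- apply: (wit_vals_in_rel wit_rows Rrows (t1 := I0) (t2 := I2)).
  by case; rewrite ?v1; auto.
- apply: (wit_vals_in_rel wit_rows Rrows (t1 := I0) (t2 := I1)).
  by case; rewrite ?v2; auto.
Qed.

Lemma wit_not_rho k : ~ preserves (wit k) (@rho k).
Proof.
move=> wit_rho; have [] := wit_rho (@rho_row k) _ (fun t => t == None).
- by move=> c; right; exists c => t; rewrite ffunE.
- exact: wit_rho_row.
- by case=> b vb; move: (vb None) (vb (Some ord0)) => /= <-.
- by case=> c vc; move: (vc (Some c)); rewrite /= eqxx.
Qed.

Section WitRho.
Variables (j k : nat) (rows : option 'I_j.+3 -> arg k.+2) (vals : option 'I_j.+3 -> bool).
Hypotheses (rows_rho : forall c, rho (fun t => rows t c))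
           (wit_rows : forall t, wit k (rows t) = Some (vals t)).

Lemma wit_rho_None_false : ~~ vals None -> rho vals.
Proof.
move=> vN; left; exists false => t; apply/negbTE/negP => vt.
have [a ra] := wit_rows_false wit_rows vN.
have [c ca] := ord_exists_neq a.
have rNc : rows None c = false by rewrite ra (negbTE ca).
case: (rows_rho c) => [[b rb]|[p rp]]; last by move: rNc; rewrite rp.
by move: (wit_rows_true wit_rows vt c); rewrite rb -(rb None) rNc.
Qed.

Lemma wit_rho_two_true s s' : s != s' -> vals (Some s) -> vals (Some s') -> rho vals.
Proof.
move=> ss' vs vs'; left; exists true => t; apply: (wit_rows_all_true wit_rows) => c.
case: (rows_rho c) => [[b rb]|[p rp]].
  by rewrite rb -(rb (Some s)) (wit_rows_true wit_rows vs).
move: (wit_rows_true wit_rows vs c) (wit_rows_true wit_rows vs' c).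
by rewrite !rp /= => /eqP ps /eqP ps'; move: ss'; rewrite -ps -ps' eqxx.
Qed.

Lemma wit_rho_no_true_columns : vals None -> (forall s, ~~ vals (Some s)) ->
  forall c, exists p, forall t, rows t c = rho_mat t p.
Proof.
move=> vN vS c; case: (rows_rho c) => [[b rb]|//]; exfalso.
have [c' c'c] := ord_exists_neq c.
have rc' s : rows (Some s) c' = false.
  have [a ra] := wit_rows_false wit_rows (vS s).
  move: (wit_rows_true wit_rows vN c); rewrite rb -(rb (Some s)) ra => /eqP ca.
  by rewrite ra -ca (negbTE c'c).
case: (rows_rho c') => [[b' rb']|[p rp]].
  by move: (wit_rows_true wit_rows vN c') (rc' ord0); rewrite !rb' => ->.
by move: (rc' p); rewrite rp /= eqxx.
Qed.

Lemma wit_rho_no_true : vals None -> (forall s, ~~ vals (Some s)) -> j = k.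
Proof.
move=> vN vS; have col := wit_rho_no_true_columns vN vS.
have row s := wit_rows_false wit_rows (vS s).
suff : #|'I_j.+3| = #|'I_k.+3| by rewrite !card_ord => -[].
apply: (@perfect_matching_card _ _ (fun s c => rows (Some s) c)).
- by move=> s; have [a ra] := row s; exists a; rewrite ra.
- by move=> c; have [p rp] := col c; exists p; rewrite rp /= eqxx.
- by move=> s s' c; have [p rp] := col c; rewrite !rp /= => /eqP <- /eqP.
- by move=> s c c'; have [a ra] := row s; rewrite !ra => /eqP -> /eqP.
Qed.

End WitRho.

Lemma wit_rho j k : j != k -> preserves (wit k) (@rho j).
Proof.
move=> jk rows rows_rho vals wit_rows.
have [vN|] := boolP (vals None); last exact: wit_rho_None_false.
case: (pickP (fun s => vals (Some s))) => [s vs|none]; last first.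
  by case/eqP: jk; apply: (wit_rho_no_true rows_rho wit_rows vN) => s; rewrite none.
case: (pickP (fun s' => vals (Some s') && (s' != s))) => [s' /andP[vs' s's]|others].
  exact: (wit_rho_two_true rows_rho wit_rows s's).
apply: (rho_single_one vN vs) => s' vs'.
by apply/eqP; move: (others s'); rewrite vs' /= => /negbFE.
Qed.

Lemma pol_of_wit S k : pol_of S (mkP (wit k)) <-> S k.
Proof.
split=> [[_ _ _ wit_rho_j]|Sk]; first by apply: contraT => /wit_rho_j /wit_not_rho.
split=> [||| j Sj]; [exact: wit_le|exact: wit_meet|exact: wit_join|].
by apply: wit_rho; apply: contraNneq Sj => ->.
Qed.

Definition Istr_C01 := {X : pfun -> Prop | in_Istr_C01 X}.

Definition pol_of_elem (S : nat -> bool) : Istr_C01 :=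
  exist _ (pol_of S) (conj (pol_of_strong S) (pol_of_total_part S)).

Lemma pol_of_elem_inj : injective pol_of_elem.
Proof.
move=> S S' /(congr1 sval) /= SS'; apply: funext => k.
by apply/idP/idP => Sk; apply/pol_of_wit; [rewrite -SS'|rewrite SS']; apply/pol_of_wit.
Qed.

Definition code (X : Istr_C01) (k : nat) : bool :=
  if unpickle k is Some p then `[< sval X p >] else false.

Lemma code_inj : injective code.
Proof.
move=> [X XI] [Y YI] XY; apply: eq_exist; apply/predeqP => p.
have := congr1 (fun c => c (pickle p)) XY; rewrite /code pickleK /= => XYp.
by split=> p_in; apply/asboolP; [rewrite -XYp|rewrite XYp]; apply/asboolP.
Qed.

Section CantorBernstein.
Local Open Scope card_scope.

Lemma injections_bijective (A : Type) (B : pointedType) (f : A -> B) (g : B -> A) :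
  injective f -> injective g -> exists h : B -> A, bijective h.
Proof.
move=> f_inj g_inj; have : [set: A] #= [set: B].
  apply: Cantor_Bernstein; first by apply/pcard_injP; exists f; exact: in2W.
  rewrite -(card_le_eql (inj_card_eq (in2W g_inj))).
  exact/subset_card_le/subsetT.
by case/card_set_bijP => h; rewrite setTT_bijective => -[h' hK h'K]; exists h', h.
Qed.

End CantorBernstein.

Theorem mainTheorem8 :
  exists F : (nat -> bool) -> {X : pfun -> Prop | in_Istr_C01 X}, bijective F.
Proof. exact: (injections_bijective code_inj pol_of_elem_inj). Qed.
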